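(* For all $n\ge0$, \[ c_{n+3}^2-1=\sum_{k=0}^n\left\{c_k^2+2\sum_{i=0}^k p_{k+2-i}c_i^2\right\}. \]
   Context: The Narayana's cows numbers $c_n$ are defined by $c_n=\delta_{n,0}+c_{n-1}+c_{n-3}$ for $n\ge0$, $c_n=0$ for $n<0$. The Padovan numbers $p_n$ are defined by $p_n=\delta_{n,0}+p_{n-2}+p_{n-3}$ for $n\ge0$, $p_n=0$ for $n<0$. $\delta_{i,j}$ is $1$ if $i=j$ and $0$ otherwise. *)

From mathcomp Require Import all_boot.
Set Implicit Arguments. Unset Strict Implicit. Unset Printing Implicit Defensive.

(* Narayana's cows numbers: c_n = [n=0] + c_{n-1} + c_{n-3}, c_n = 0 for n<0.
   Hence c_0 = c_1 = c_2 = 1 and c_{n+3} = c_{n+2} + c_n. *)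
Fixpoint cows (n : nat) : nat :=
  match n with
  | 0 => 1
  | k.+1 => match k with
            | 0 => 1
            | j.+1 => match j with
                      | 0 => 1
                      | m.+1 => cows k + cows m
                      end
            end
  end.

(* Padovan numbers: p_n = [n=0] + p_{n-2} + p_{n-3}, p_n = 0 for n<0.
   Hence p_0 = 1, p_1 = 0, p_2 = 1 and p_{n+3} = p_{n+1} + p_n. *)
Fixpoint padovan (n : nat) : nat :=
  match n with
  | 0 => 1
  | 1 => 0
  | 2 => 1
  | (m.+1 as k).+2 => padovan k + padovan m
  end.

Lemma cows_check : [seq cows i | i <- iota 0 10] = [:: 1;1;1;2;3;4;6;9;13;19].
Proof. by []. Qed.
Lemma padovan_check : [seq padovan i | i <- iota 0 10] = [:: 1;0;1;1;1;2;2;3;4;5].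
Proof. by []. Qed.

From mathcomp Require Import all_boot.
From mathcomp Require Import zify.

(* Squaring the recurrence gives c_{k+3}^2 - c_{k+2}^2 = c_k^2 + 2 c_{k+2} c_k,
   so the theorem telescopes once c_{k+2} c_k is identified with the inner
   Padovan convolution of the c_i^2.  Both sides of that identity satisfy
   x_{k+3} = x_{k+1} + x_k + c_{k+2}^2 + c_{k+3}^2: the convolution because
   p_{m+3} = p_{m+1} + p_m, the product because c_{k+5} = c_{k+3} + c_{k+2} + c_{k+1}. *)

Lemma cowsS m : cows m.+3 = cows m.+2 + cows m.
Proof. by []. Qed.

Lemma padovanS m : padovan m.+3 = padovan m.+1 + padovan m.
Proof. by case: m. Qed.

Definition padovan_conv (a : nat -> nat) (k : nat) : nat :=
  \sum_(0 <= i < k.+1) padovan (k + 2 - i) * a i.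

Lemma padovan_convS a k :
  padovan_conv a k.+3 =
  padovan_conv a k.+1 + padovan_conv a k + a k.+2 + a k.+3.
Proof.
rewrite /padovan_conv (big_nat_recr k.+3) // (big_nat_recr k.+2) //.
rewrite !(big_nat_recr k.+1) //.
have -> : \sum_(0 <= i < k.+1) padovan (k.+3 + 2 - i) * a i =
          \sum_(0 <= i < k.+1) padovan (k.+1 + 2 - i) * a i +
          \sum_(0 <= i < k.+1) padovan (k + 2 - i) * a i.
  rewrite -big_split; apply: eq_big_nat => i /andP[_ lt_ik].
  have -> : k.+3 + 2 - i = (k + 2 - i).+3 by lia.
  by rewrite padovanS mulnDl; congr (padovan _ * _ + _); lia.
have [-> -> -> ->] : [/\ k.+3 + 2 - k.+1 = 4, k.+3 + 2 - k.+2 = 3,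
                        k.+3 + 2 - k.+3 = 2 & k.+1 + 2 - k.+1 = 2] by split; lia.
rewrite /= !mul1n; lia.
Qed.

Lemma cows_mul_padovan_conv k :
  cows k.+2 * cows k = padovan_conv (fun i => cows i ^ 2) k.
Proof.
elim/ltn_ind: k => -[|[|[|k]]] IH; try by rewrite /padovan_conv unlock.
rewrite padovan_convS -!IH ?ltnS ?leqnSn ?leqW //.
rewrite !cowsS; nia.
Qed.

Lemma cows_sqS k :
  cows k.+3 ^ 2 = cows k.+2 ^ 2 + (cows k ^ 2 + 2 * (cows k.+2 * cows k)).
Proof. by rewrite cowsS sqrnD addnA. Qed.

Theorem mainTheorem14 (n : nat) :
  (cows (n + 3)) ^ 2 - 1 =
  \sum_(0 <= k < n.+1)
     ((cows k) ^ 2 + 2 * \sum_(0 <= i < k.+1) padovan (k + 2 - i) * (cows i) ^ 2).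
Proof.
have cows_sq_le k : cows k.+2 ^ 2 <= cows k.+3 ^ 2 by rewrite cows_sqS leq_addr.
transitivity (\sum_(0 <= k < n.+1) (cows k.+3 ^ 2 - cows k.+2 ^ 2)).
  by rewrite (telescope_sumn_in (f := fun k => cows k.+2 ^ 2)) ?addn3.
apply: eq_big_nat => k _.
by rewrite cows_sqS addKn cows_mul_padovan_conv.
Qed.
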